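(* Consider optimal control problem OCP-2 (described in the context). The optimal control $u_*^2$ (given pointwise by maximization of the Hamiltonian along the optimal trajectory and adjoint function) is a continuous function on the interval $[0,T]$.
   Context: Parameters: $\beta_1,\beta_2,\gamma,\rho_1,\rho_2>0$; $\sigma_1,\sigma_2>0$ with $\sigma_1+\sigma_2=1$; $q\in[0,1]$; $0\le u_{\max}<1$; weights $\alpha_1,\alpha_2\ge0$, $\alpha_3>0$; horizon $T>0$; initial values $s_0,e_0,i_0,j_0>0$ with $s_0+e_0+i_0+j_0\le1$. Admissible controls: Lebesgue measurable $u:[0,T]\to[0,u_{\max}]$. State system: $s'=-sn^{-1}(\beta_1(1-u)i+\beta_2j)$, $e'=sn^{-1}(\beta_1(1-u)i+\beta_2j)-\gamma e$, $i'=\sigma_1\gamma e-\rho_1 i$, $j'=\sigma_2\gamma e-\rho_2 j$, $n'=-q\rho_2 j$, with $s(0)=s_0,e(0)=e_0,i(0)=i_0,j(0)=j_0,n(0)=1$. OCP-2 is the problem of minimizing $Q(u)=\alpha_1(e(T)+i(T)+j(T))+\alpha_2\int_0^T(e+i+j)\,dt+0.5\alpha_3\int_0^Tu^2\,dt$ over admissible controls. Hamiltonian: $H(s,e,i,j,n,\phi_1,\dots,\phi_5,u)=-sn^{-1}(\beta_1(1-u)i+\beta_2j)(\phi_1-\phi_2)-\gamma e(\phi_2-\sigma_1\phi_3-\sigma_2\phi_4)-\rho_1 i\phi_3-\rho_2 j(\phi_4+q\phi_5)-\alpha_2(e+i+j)-0.5\alpha_3u^2$. For an optimal control $u_*^2$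 with optimal trajectory $(s_*^2,e_*^2,i_*^2,j_*^2,n_*^2)$, the adjoint function $\phi_*=(\phi_1^*,\dots,\phi_5^* )$ of the Pontryagin maximum principle is a nontrivial solution of (with $s,i,j,n,u$ denoting the optimal ones) $\phi_1'=n^{-1}(\beta_1(1-u)i+\beta_2j)(\phi_1-\phi_2)$, $\phi_2'=\gamma(\phi_2-\sigma_1\phi_3-\sigma_2\phi_4)+\alpha_2$, $\phi_3'=\beta_1(1-u)sn^{-1}(\phi_1-\phi_2)+\rho_1\phi_3+\alpha_2$, $\phi_4'=\beta_2sn^{-1}(\phi_1-\phi_2)+\rho_2(\phi_4+q\phi_5)+\alpha_2$, $\phi_5'=-sn^{-2}(\beta_1(1-u)i+\beta_2j)(\phi_1-\phi_2)$, with $\phi_1(T)=0$, $\phi_2(T)=\phi_3(T)=\phi_4(T)=-\alpha_1$, $\phi_5(T)=0$, and $u_*^2(t)$ maximizes $H(s_*^2(t),e_*^2(t),i_*^2(t),j_*^2(t),n_*^2(t),\phi_*(t),u)$ over $u\in[0,u_{\max}]$. *)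

From HB Require Import structures.
From mathcomp Require Import all_boot all_order all_algebra.
From mathcomp Require Import all_classical all_reals all_analysis.
Import Order.TTheory GRing.Theory Num.Theory.
Set Implicit Arguments.
Unset Strict Implicit.
Unset Printing Implicit Defensive.
Local Open Scope classical_set_scope.
Local Open Scope ring_scope.

(** The real line equipped with the Lebesgue (completed) sigma-algebra. *)
Definition LebType (R : realType) := caratheodory_type ((wlength (R:=R) idfun)^*)%mu.

Definition leb_measurable_fun {R : realType} (D : set R) (u : R -> R) : Prop :=
  @measurable_fun _ _ (LebType R) R D u.

Definition leb_integrable {R : realType} (D : set R) (f : R -> R) : Prop :=
  (@completed_lebesgue_measure R).-integrable (D : set (LebType R)) (EFin \o f).
Definition leb_int {R : realType} (D : set R) (f : R -> R) : R :=
  @Rintegral _ (LebType R) R completed_lebesgue_measure D f.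

Record ocp_params (R : realType) := OcpParams {
  beta1 : R; beta2 : R; gamma : R; rho1 : R; rho2 : R;
  sigma1 : R; sigma2 : R; qq : R; umax : R;
  alpha1 : R; alpha2 : R; alpha3 : R; TT : R;
  s0 : R; e0 : R; i0 : R; j0 : R }.

Definition ocp_params_ok {R : realType} (P : ocp_params R) : Prop :=
  [/\ 0 < beta1 P, 0 < beta2 P, 0 < gamma P, 0 < rho1 P & 0 < rho2 P] /\
  [/\ 0 < sigma1 P, 0 < sigma2 P, sigma1 P + sigma2 P = 1,
      0 <= qq P <= 1 & 0 <= umax P < 1] /\
  [/\ 0 <= alpha1 P, 0 <= alpha2 P, 0 < alpha3 P & 0 < TT P] /\
  [/\ 0 < s0 P, 0 < e0 P, 0 < i0 P, 0 < j0 P &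
      s0 P + e0 P + i0 P + j0 P <= 1].

Definition admissible {R : realType} (P : ocp_params R) (u : R -> R) : Prop :=
  leb_measurable_fun `[0, TT P] u /\
  forall t, 0 <= t <= TT P -> 0 <= u t <= umax P.

Definition infl {R : realType} (P : ocp_params R) (u s i j n : R) : R :=
  s / n * (beta1 P * (1 - u) * i + beta2 P * j).

(** (s,e,i,j,n) is a (Caratheodory, i.e. absolutely continuous, integral-form)
    solution of the state system on [0,T] for control u. *)
Definition is_trajectory {R : realType} (P : ocp_params R) (u s e i j n : R -> R) : Prop :=
  let fs := fun r => - infl P (u r) (s r) (i r) (j r) (n r) in
  let fe := fun r => infl P (u r) (s r) (i r) (j r) (n r) - gamma P * e r in
  let fi := fun r => sigma1 P * gamma P * e r - rho1 P * i r in
  let fj := fun r => sigma2 P * gamma P * e r - rho2 P * j r in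
  let fn := fun r => - (qq P * rho2 P * j r) in
  [/\ leb_integrable `[0, TT P] fs, leb_integrable `[0, TT P] fe,
      leb_integrable `[0, TT P] fi, leb_integrable `[0, TT P] fj &
      leb_integrable `[0, TT P] fn] /\
  forall t, 0 <= t <= TT P ->
    [/\ s t = s0 P + leb_int `[0, t] fs, e t = e0 P + leb_int `[0, t] fe,
        i t = i0 P + leb_int `[0, t] fi, j t = j0 P + leb_int `[0, t] fj &
        n t = 1 + leb_int `[0, t] fn].

Definition cost {R : realType} (P : ocp_params R) (u e i j : R -> R) : R :=
  alpha1 P * (e (TT P) + i (TT P) + j (TT P))
  + alpha2 P * leb_int `[0, TT P] (fun r => e r + i r + j r)
  + 2^-1 * alpha3 P * leb_int `[0, TT P] (fun r => u r ^+ 2).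

Definition optimal_ocp2 {R : realType} (P : ocp_params R) (u s e i j n : R -> R) : Prop :=
  admissible P u /\ is_trajectory P u s e i j n /\
  forall v s' e' i' j' n', admissible P v -> is_trajectory P v s' e' i' j' n' ->
    cost P u e i j <= cost P v e' i' j'.

Definition hamiltonian {R : realType} (P : ocp_params R)
    (s e i j n p1 p2 p3 p4 p5 u : R) : R :=
  - infl P u s i j n * (p1 - p2)
  - gamma P * e * (p2 - sigma1 P * p3 - sigma2 P * p4)
  - rho1 P * i * p3 - rho2 P * j * (p4 + qq P * p5)
  - alpha2 P * (e + i + j) - 2^-1 * alpha3 P * u ^+ 2.

Definition is_adjoint {R : realType} (P : ocp_params R) (u s i j n p1 p2 p3 p4 p5 : R -> R) : Prop :=
  let g1 := fun r => (beta1 P * (1 - u r) * i r + beta2 P * j r) / n r * (p1 r - p2 r) in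
  let g2 := fun r => gamma P * (p2 r - sigma1 P * p3 r - sigma2 P * p4 r) + alpha2 P in
  let g3 := fun r => beta1 P * (1 - u r) * s r / n r * (p1 r - p2 r) + rho1 P * p3 r + alpha2 P in
  let g4 := fun r => beta2 P * s r / n r * (p1 r - p2 r) + rho2 P * (p4 r + qq P * p5 r) + alpha2 P in
  let g5 := fun r => - (s r / (n r ^+ 2) * (beta1 P * (1 - u r) * i r + beta2 P * j r) * (p1 r - p2 r)) in
  [/\ leb_integrable `[0, TT P] g1, leb_integrable `[0, TT P] g2,
      leb_integrable `[0, TT P] g3, leb_integrable `[0, TT P] g4 &
      leb_integrable `[0, TT P] g5] /\
  forall t, 0 <= t <= TT P ->
    [/\ p1 t = 0 - leb_int `[t, TT P] g1,
        p2 t = - alpha1 P - leb_int `[t, TT P] g2,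
        p3 t = - alpha1 P - leb_int `[t, TT P] g3,
        p4 t = - alpha1 P - leb_int `[t, TT P] g4 &
        p5 t = 0 - leb_int `[t, TT P] g5].

Definition nontrivial_adjoint {R : realType} (P : ocp_params R) (p1 p2 p3 p4 p5 : R -> R) : Prop :=
  exists t, 0 <= t <= TT P /\
    (p1 t != 0 \/ p2 t != 0 \/ p3 t != 0 \/ p4 t != 0 \/ p5 t != 0).

(* Along the optimal trajectory the Hamiltonian is a concave quadratic in the
   control, H(v) = H(0) + alpha3 (w v - v^2 / 2) with the switching function
   w = beta1 s i (phi1 - phi2) / (alpha3 n), so the maximum condition forces
   u = min (max w 0) umax.  States and adjoints are integrals of integrable
   functions, hence continuous by absolute continuity of the Lebesgue integral,
   so u is continuous once n does not vanish.  Now n - (s + e + i + j) starts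
   nonnegative and is nondecreasing while i, j >= 0, and s, e, i, j stay
   positive: each satisfies x' >= -K x as long as all four are nonnegative, and
   on a short enough interval this bound keeps half of the maximum of x, so
   none of them can reach 0 first. *)

From HB Require Import structures.
From mathcomp Require Import all_boot all_order all_algebra.
From mathcomp Require Import all_classical all_reals all_analysis.
From mathcomp Require Import ring lra.
Import Order.TTheory GRing.Theory Num.Theory.
Import numFieldNormedType.Exports.
Local Open Scope classical_set_scope.
Local Open Scope ring_scope.

Set Implicit Arguments.
Unset Strict Implicit.
Unset Printing Implicit Defensive.

Section integral_over_intervals.
Variable R : realType.
Notation mu := (@completed_lebesgue_measure R).
Implicit Types (f : R -> R) (I J : interval R).

Lemma leb_measurable_itv I : measurable ([set` I] : set (LebType R)).
Proof. by apply: sub_caratheodory; exact: measurable_itv. Qed.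

Lemma leb_measure_itv I :
  mu [set` I] = (if I.1 < I.2 then (I.2 : \bar R) - I.1 else 0)%E.
Proof. exact: lebesgue_measure_itv. Qed.

Lemma leb_integrable_subitv f I J :
  [set` J] `<=` [set` I] -> leb_integrable [set` I] f -> leb_integrable [set` J] f.
Proof. exact: integrableS (leb_measurable_itv I) (leb_measurable_itv J). Qed.

Lemma leb_int_itv_split f (a x b : itv_bound R) : (a <= x)%O -> (x <= b)%O ->
  leb_integrable [set` Interval a b] f ->
  leb_int [set` Interval a b] f =
  leb_int [set` Interval a x] f + leb_int [set` Interval x b] f.
Proof.
move=> ax xb intf; rewrite /leb_int (itv_bndbnd_setU ax xb).
apply: Rintegral_setU; rewrite -?itv_bndbnd_setU //; try exact: leb_measurable_itv.
apply/disj_setPS => z [/=]; rewrite !itv_boundlr => /andP[_ zx] /andP[xz _].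
by move: (le_trans zx xz); rewrite bnd_simp ltxx.
Qed.

Lemma leb_integrableB f g I : leb_integrable [set` I] f -> leb_integrable [set` I] g ->
  leb_integrable [set` I] (f \- g).
Proof. exact/integrableB/leb_measurable_itv. Qed.

Lemma leb_intB f g I : leb_integrable [set` I] f -> leb_integrable [set` I] g ->
  leb_int [set` I] (f \- g) = leb_int [set` I] f - leb_int [set` I] g.
Proof. exact/RintegralB/leb_measurable_itv. Qed.

Lemma leb_int_itv_point f (a : R) : leb_integrable `[a, a] f -> leb_int `[a, a] f = 0.
Proof.
move=> /(measurable_int mu) mf.
rewrite /leb_int /Rintegral null_set_integral //; first exact: leb_measurable_itv.
by have := leb_measure_itv `[a, a]; rewrite /= ltxx.
Qed.

Lemma leb_int_itv_small f I : leb_integrable [set` I] f ->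
  forall e : R, 0 < e -> exists2 d : R, 0 < d & forall J, [set` J] `<=` [set` I] ->
    (mu [set` J] < d%:E)%E -> `|leb_int [set` J] f| < e.
Proof.
move=> intf e e0.
have intIf : mu.-integrable setT (EFin \o f \_ [set` I]).
  rewrite -restrict_EFin; apply/(@integrable_restrict _ (LebType R)) => //=.
    exact: leb_measurable_itv.
  by rewrite setTI.
have [d [d0 smallf]] := integral_normr_continuous intIf e0.
exists d => // J JI muJ; have mJ := leb_measurable_itv J.
apply: le_lt_trans (smallf _ mJ muJ); rewrite /leb_int.
apply: le_trans (le_normr_Rintegral mJ (leb_integrable_subitv JI intf)) _.
rewrite le_eqVlt; apply/orP; left; apply/eqP.
apply: eq_Rintegral => z; rewrite inE => Jz.
by rewrite patchE ifT // inE; apply: JI.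
Qed.

Lemma within_continuous_increments (F : R -> R) (a b : R) :
  (forall e : R, 0 < e -> exists2 d : R, 0 < d & forall x y : R,
     a <= x -> x <= y -> y <= b -> y - x < d -> `|F y - F x| < e) ->
  {within `[a, b], continuous F}.
Proof.
move=> incrF; rewrite continuous_subspace_in => x; rewrite inE => abx.
rewrite /continuous_at /prop_for; have [_|//] := nbhs_subspaceP `[a, b] x.
move: abx; rewrite /= in_itv /= => /andP[ax xb].
apply/(@cvgrPdist_lt _ R^o _ _ (within_filter _ _)) => e e0.
have [d d0 smallF] := incrF e e0.
apply/nbhs_ballP; exists d => //= y; rewrite /ball /= in_itv /= => xyd /andP[ay yb].
have [xy|/ltW yx] := leP x y.
  by rewrite distrC; apply: smallF => //; rewrite distrC ger0_norm ?subr_ge0 in xyd.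
by apply: smallF => //; rewrite ger0_norm ?subr_ge0 in xyd.
Qed.

Lemma leb_measure_itv_lt (b1 b2 : bool) (x y d : R) : 0 < d -> y - x < d ->
  (mu [set` Interval (BSide b1 x) (BSide b2 y)] < d%:E)%E.
Proof. by move=> d0 yxd; rewrite leb_measure_itv /=; case: ifP; rewrite ?lte_fin. Qed.

Lemma leb_int_continuous f (a b : R) : leb_integrable `[a, b] f ->
  {within `[a, b], continuous (fun t => leb_int `[a, t] f)}.
Proof.
move=> intf; apply: within_continuous_increments => e /(leb_int_itv_small intf)[d d0 smallf].
exists d => // x y ax xy yb yxd.
have sub_ab : `[a, y] `<=` `[a, b] by apply: subset_itv; rewrite bnd_simp.
rewrite (leb_int_itv_split (x := BRight x)) ?bnd_simp //; last first.
  exact: leb_integrable_subitv intf.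
rewrite addrAC subrr add0r; apply: smallf; last exact: leb_measure_itv_lt.
by apply: subset_itv; rewrite bnd_simp // (le_trans ax).
Qed.

Lemma leb_int_continuous_back f (a b : R) : leb_integrable `[a, b] f ->
  {within `[a, b], continuous (fun t => leb_int `[t, b] f)}.
Proof.
move=> intf; apply: within_continuous_increments => e /(leb_int_itv_small intf)[d d0 smallf].
exists d => // x y ax xy yb yxd.
have sub_ab : `[x, b] `<=` `[a, b] by apply: subset_itv; rewrite bnd_simp.
rewrite [leb_int `[x, b] f](leb_int_itv_split (x := BLeft y)) ?bnd_simp //; last first.
  exact: leb_integrable_subitv intf.
rewrite opprD addrCA subrr addr0 normrN; apply: smallf; last exact: leb_measure_itv_lt.
by apply: subset_itv; rewrite bnd_simp // (le_trans yb).
Qed.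

Lemma leb_int_oc_ge (m x y : R) f : x <= y -> leb_integrable `]x, y] f ->
  (forall r : R, x < r <= y -> m <= f r) -> m * (y - x) <= leb_int `]x, y] f.
Proof.
move=> xy intf fge; have mxy := leb_measurable_itv `]x, y].
have muxy : mu `]x, y] = (y - x)%:E.
  rewrite leb_measure_itv /= lte_fin; case: ltP => [_|yx]; first by rewrite EFinB.
  have /eqP-> : y == x by rewrite eq_le yx xy.
  by rewrite subrr.
have intm : leb_integrable `]x, y] (fun=> m).
  apply/integrableP; split; first exact: measurable_cst.
  by rewrite integral_cst //= muxy -EFinM ltry.
rewrite -[y - x]/(fine (y - x)%:E) -muxy -Rintegral_cst //.
apply: le_Rintegral => // r; rewrite /= in_itv /=; exact: fge.
Qed.

End integral_over_intervals.

Section integral_equations.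
Variable R : realType.
Implicit Types (x h : R -> R) (a b : R).

Lemma leb_primitive_continuous x h (x0 a b : R) : leb_integrable `[a, b] h ->
  (forall t : R, a <= t <= b -> x t = x0 + leb_int `[a, t] h) ->
  {within `[a, b], continuous x}.
Proof.
move=> inth xE; apply: (@subspace_eq_continuous _ _ _ (fun t => x0 + leb_int `[a, t] h)).
  by move=> t; rewrite inE /= in_itv /= => /xE.
by move=> t; apply: cvgD; [exact: cvg_cst | exact: leb_int_continuous inth t].
Qed.

Lemma leb_primitive_back_continuous x h (x0 a b : R) : leb_integrable `[a, b] h ->
  (forall t : R, a <= t <= b -> x t = x0 - leb_int `[t, b] h) ->
  {within `[a, b], continuous x}.
Proof.
move=> inth xE; apply: (@subspace_eq_continuous _ _ _ (fun t => x0 - leb_int `[t, b] h)).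
  by move=> t; rewrite inE /= in_itv /= => /xE.
by move=> t; apply: cvgB; [exact: cvg_cst | exact: leb_int_continuous_back inth t].
Qed.

Lemma leb_primitive_increment x h (x0 a b s t : R) : leb_integrable `[a, b] h ->
  (forall t : R, a <= t <= b -> x t = x0 + leb_int `[a, t] h) ->
  a <= s -> s <= t -> t <= b -> x t - x s = leb_int `]s, t] h.
Proof.
move=> inth xE a_s st tb; have a_t := le_trans a_s st.
rewrite xE ?a_t // xE ?a_s ?(le_trans st) // (leb_int_itv_split (x := BRight s)) ?bnd_simp //.
  by rewrite opprD addrACA subrr add0r addrAC subrr add0r.
by apply: leb_integrable_subitv inth; apply: subset_itv; rewrite bnd_simp.
Qed.

End integral_equations.

Section positivity.
Variable R : realType.
Implicit Types (g x h : R -> R) (a b c : R).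

Lemma within_continuous_dist g (A : set R) (t : R) : {within A, continuous g} -> A t ->
  forall e : R, 0 < e -> exists2 d : R, 0 < d &
    forall y : R, A y -> `|t - y| < d -> `|g t - g y| < e.
Proof.
rewrite continuous_subspace_in => cg At e e0.
have := cg t; rewrite inE => /(_ At); rewrite /continuous_at /prop_for.
have [_|//] := nbhs_subspaceP A t.
move=> /cvgrPdist_lt /(_ e e0) /nbhs_ballP[d d0 near_t].
by exists d => // y Ay ty; apply: near_t.
Qed.

Lemma continuous_induction_gt0 g a b : {within `[a, b], continuous g} -> 0 < g a ->
  (forall c : R, a < c <= b -> (forall t : R, a <= t < c -> 0 < g t) -> 0 <= g c -> 0 < g c) ->
  forall t : R, a <= t <= b -> 0 < g t.
Proof.
move=> cg ga step z /andP[az zb]; rewrite ltNge; apply/negP => gz.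
pose S := [set t | a <= t <= b /\ g t <= 0].
have Sz : S z by split => //; rewrite az.
have lbS : has_lbound S by exists a => t [/andP[]].
have infS : has_inf S by split => //; exists z.
set c := inf S.
have ac : a <= c by apply: lb_le_inf; [exists z | move=> t [/andP[]]].
have cb : c <= b := le_trans (ge_inf lbS Sz) zb.
have abc : `[a, b]%classic c by rewrite /= in_itv /= ac cb.
have gpos t : a <= t < c -> 0 < g t.
  move=> /andP[a_t tc]; rewrite ltNge; apply/negP => gt.
  have St : S t by split => //; rewrite a_t (le_trans (ltW tc) cb).
  by move: (ge_inf lbS St); rewrite leNgt tc.
have gc_le0 : g c <= 0.
  rewrite leNgt; apply/negP => gc.
  have [d d0 near_c] := within_continuous_dist cg abc gc.
  have [y Sy ycd] := inf_adherent d0 infS.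
  have cy : c <= y := ge_inf lbS Sy.
  case: Sy => /andP[ay yb] gy.
  have := near_c y; rewrite /= in_itv /= ay yb distrC ger0_norm ?subr_ge0 //.
  by move=> /(_ isT); rewrite ltr_norml; lra.
have ac' : a < c.
  rewrite lt_neqAle ac andbT; apply/eqP => ac_eq.
  by move: gc_le0; rewrite -ac_eq leNgt ga.
have gc_ge0 : 0 <= g c.
  rewrite leNgt; apply/negP; rewrite -oppr_gt0 => gc.
  have [d d0 near_c] := within_continuous_dist cg abc gc.
  have [t [a_t tc ctd]] : exists t, [/\ a <= t, t < c & c - t < d].
    by case: (ltP (c - d / 2) a) => ?; [exists a | exists (c - d / 2)]; split; lra.
  have := near_c t; rewrite /= in_itv /= a_t (le_trans (ltW tc) cb) ger0_norm ?subr_ge0 ?ltW //.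
  have := gpos t; rewrite a_t tc.
  by move=> /(_ isT) gt /(_ isT ctd); rewrite ltr_norml; lra.
by move: gc_le0; rewrite leNgt step // ?ac' ?cb.
Qed.

Lemma leb_primitive_gt0 x h (x0 a b c K : R) : leb_integrable `[a, b] h ->
  (forall t : R, a <= t <= b -> x t = x0 + leb_int `[a, t] h) ->
  a < c -> c <= b -> 0 <= K ->
  (forall t : R, a <= t < c -> 0 < x t) ->
  (forall t : R, a <= t <= c -> - (K * x t) <= h t) ->
  0 < x c.
Proof.
move=> inth xE ac cb K0 xpos hge.
(* On [a', c] with c - a' <= 1 / (2 K + 2), x keeps half of its maximum. *)
pose dl := (2 * K + 2)^-1.
have dlE : (2 * K + 2) * dl = 1 by rewrite mulfV // gt_eqF //; lra.
have dl0 : 0 < dl by rewrite invr_gt0; lra.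
have [a' [aa' a'c ca']] : exists a', [/\ a <= a', a' < c & c - a' <= dl].
  by case: (ltP (c - dl) a) => ?; [exists a | exists (c - dl)]; split; lra.
have sub : `[a', c] `<=` `[a, b] by apply: subset_itv; rewrite bnd_simp; lra.
have [tm] := EVT_max (ltW a'c) (continuous_subspaceW sub (leb_primitive_continuous inth xE)).
rewrite in_itv /= => /andP[a'tm tmc] xmax.
have xM t : a' <= t <= c -> x t <= x tm by move=> ?; apply: xmax; rewrite in_itv.
have M0 : 0 < x tm by apply: lt_le_trans (xpos a' _) (xM a' _); apply/andP; split; lra.
have decay : x tm - K * x tm * (c - tm) <= x c.
  rewrite -lerBrDl -mulNr (leb_primitive_increment inth xE) //; last lra.
  apply: leb_int_oc_ge => //.
    by apply: leb_integrable_subitv inth; apply: subset_itv; rewrite bnd_simp; lra.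
  move=> r /andP[tmr rc]; apply: le_trans (hge r _); last by apply/andP; split; lra.
  by rewrite lerN2 ler_wpM2l // xM //; apply/andP; split; lra.
have : K * (c - tm) <= K * dl by apply: ler_wpM2l => //; lra.
nra.
Qed.

End positivity.

Lemma infl_bounds {R : realType} (P : ocp_params R) (v ss ii jj nn : R) :
  0 < beta1 P -> 0 < beta2 P -> 0 <= v <= 1 -> 0 <= ss -> 0 <= ii <= nn -> 0 <= jj <= nn ->
  0 <= infl P v ss ii jj nn <= (beta1 P + beta2 P) * ss.
Proof.
move=> b1 b2 /andP[v0 v1] ss0 /andP[ii0 iin] /andP[jj0 jjn]; rewrite /infl.
have [->|nn_neq0] := eqVneq nn 0.
  by rewrite invr0 mulr0 mul0r lexx /=; apply: mulr_ge0 => //; apply: addr_ge0; apply: ltW.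
have nn0 : 0 < nn by rewrite lt_neqAle eq_sym nn_neq0 (le_trans ii0 iin).
have X0 : 0 <= beta1 P * (1 - v) * ii + beta2 P * jj.
  have : 0 <= (1 - v) * ii by nra.
  nra.
have Xle : beta1 P * (1 - v) * ii + beta2 P * jj <= (beta1 P + beta2 P) * nn.
  have : (1 - v) * ii <= nn by nra.
  nra.
apply/andP; split; first by apply: mulr_ge0 => //; apply: divr_ge0 => //; apply: ltW.
rewrite mulrAC -mulrA [leRHS]mulrC; apply: ler_wpM2l => //.
by rewrite ler_pdivrMr.
Qed.

Section trajectory.
Variables (R : realType) (P : ocp_params R) (u s e i j n : R -> R).
Implicit Types (t r c : R).
Hypothesis Pok : ocp_params_ok P.
Hypothesis u_bnd : forall t, 0 <= t <= TT P -> 0 <= u t <= umax P.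
Hypothesis traj : is_trajectory P u s e i j n.
Local Notation T := (TT P).

Let fs r := - infl P (u r) (s r) (i r) (j r) (n r).
Let fe r := infl P (u r) (s r) (i r) (j r) (n r) - gamma P * e r.
Let fi r := sigma1 P * gamma P * e r - rho1 P * i r.
Let fj r := sigma2 P * gamma P * e r - rho2 P * j r.
Let fn r := - (qq P * rho2 P * j r).

Let traj_int : [/\ leb_integrable `[0, T] fs, leb_integrable `[0, T] fe,
  leb_integrable `[0, T] fi, leb_integrable `[0, T] fj & leb_integrable `[0, T] fn].
Proof. by case: traj. Qed.

Let traj_eq t : 0 <= t <= T ->
  [/\ s t = s0 P + leb_int `[0, t] fs, e t = e0 P + leb_int `[0, t] fe,
      i t = i0 P + leb_int `[0, t] fi, j t = j0 P + leb_int `[0, t] fj &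
      n t = 1 + leb_int `[0, t] fn].
Proof. by case: traj => _; apply. Qed.

Lemma trajectory_continuous :
  [/\ {within `[0, T], continuous s}, {within `[0, T], continuous e},
      {within `[0, T], continuous i}, {within `[0, T], continuous j} &
      {within `[0, T], continuous n}].
Proof.
have [ifs ife ifi ifj ifn] := traj_int.
split.
- by apply: (leb_primitive_continuous (x0 := s0 P) ifs) => t /traj_eq[].
- by apply: (leb_primitive_continuous (x0 := e0 P) ife) => t /traj_eq[].
- by apply: (leb_primitive_continuous (x0 := i0 P) ifi) => t /traj_eq[].
- by apply: (leb_primitive_continuous (x0 := j0 P) ifj) => t /traj_eq[].
- by apply: (leb_primitive_continuous (x0 := 1) ifn) => t /traj_eq[].
Qed.

Lemma trajectory_at0 : [/\ s 0 = s0 P, e 0 = e0 P, i 0 = i0 P & j 0 = j0 P].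
Proof.
have [_ [_ [[_ _ _ T0] _]]] := Pok.
have [ifs ife ifi ifj _] := traj_int.
have sub0 : (`[0, 0] : set R) `<=` `[0, T].
  by apply: subset_itv; rewrite bnd_simp //; exact: ltW.
have T00 : 0 <= (0 : R) <= T by rewrite lexx ltW.
have [-> -> -> -> _] := traj_eq T00.
by split; rewrite leb_int_itv_point ?addr0 //; exact: leb_integrable_subitv sub0 _.
Qed.

Lemma population_ge r : 0 <= r <= T ->
  (forall t, 0 <= t <= r -> 0 <= i t /\ 0 <= j t) -> s r + e r + i r + j r <= n r.
Proof.
move=> /[dup] hr /andP[r0 rT] ij_ge0.
have [[_ _ _ r1 r2] [[_ _ s12 /andP[_ q1] _] [_ [_ _ _ _ init]]]] := Pok.
have [ifs ife ifi ifj ifn] := traj_int.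
have sub : `[0, r] `<=` `[0, T] by apply: subset_itv; rewrite bnd_simp.
have intr f : leb_integrable `[0, T] f -> leb_integrable `[0, r] f := leb_integrable_subitv sub.
have : 0 <= leb_int `[0, r] (fn \- fs \- fe \- fi \- fj).
  apply: Rintegral_ge0 => t; rewrite /= in_itv /= => /ij_ge0[it jt].
  have -> : fn t - fs t - fe t - fi t - fj t = rho1 P * i t + (1 - qq P) * rho2 P * j t.
    by rewrite /fn /fs /fe /fi /fj (_ : sigma2 P = 1 - sigma1 P); [ring | lra].
  by rewrite addr_ge0 ?mulr_ge0 ?subr_ge0 // ltW.
have int1 := leb_integrableB (intr _ ifn) (intr _ ifs).
have int2 := leb_integrableB int1 (intr _ ife).
have int3 := leb_integrableB int2 (intr _ ifi).
rewrite (leb_intB int3 (intr _ ifj)) (leb_intB int2 (intr _ ifi)).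
rewrite (leb_intB int1 (intr _ ife)) (leb_intB (intr _ ifn) (intr _ ifs)).
have [-> -> -> -> ->] := traj_eq hr.
lra.
Qed.

Lemma trajectory_step c : 0 < c <= T ->
  (forall t, 0 <= t < c -> [/\ 0 < s t, 0 < e t, 0 < i t & 0 < j t]) ->
  (forall t, 0 <= t <= c -> [/\ 0 <= s t, 0 <= e t, 0 <= i t & 0 <= j t]) ->
  [/\ 0 < s c, 0 < e c, 0 < i c & 0 < j c].
Proof.
move=> /andP[c0 cT] pos nneg.
have [[b1 b2 g0 r1 r2] [[sg1 sg2 _ _ /andP[_ um1]] _]] := Pok.
have [ifs ife ifi ifj _] := traj_int.
have inT t : 0 <= t <= c -> 0 <= t <= T.
  by case/andP=> t0 tc; rewrite t0 (le_trans tc cT).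
have infl_bnd t : 0 <= t <= c ->
    0 <= infl P (u t) (s t) (i t) (j t) (n t) <= (beta1 P + beta2 P) * s t.
  move=> /[dup] tc /andP[t0 tc']; have [st et it jt] := nneg t tc.
  have ij r : 0 <= r <= t -> 0 <= i r /\ 0 <= j r.
    by case/andP=> r0 rt; have [_ _ ir jr] := nneg r (ltac:(by rewrite r0 (le_trans rt tc'))).
  have N := population_ge (inT t tc) ij.
  have /andP[u0 uu] := u_bnd (inT t tc).
  apply: infl_bounds => //; rewrite ?u0 ?(le_trans uu (ltW um1)) ?st ?it ?jt //=; lra.
split.
- apply: (leb_primitive_gt0 (x0 := s0 P) (K := beta1 P + beta2 P) ifs) => //.
  + by move=> t /traj_eq[].
  + by rewrite addr_ge0 // ltW.
  + by move=> t /pos[].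
  + by move=> t /infl_bnd /andP[_ h]; rewrite /fs; lra.
- apply: (leb_primitive_gt0 (x0 := e0 P) (K := gamma P) ife) => //.
  + by move=> t /traj_eq[].
  + exact: ltW.
  + by move=> t /pos[].
  + by move=> t /infl_bnd /andP[h _]; rewrite /fe; lra.
- apply: (leb_primitive_gt0 (x0 := i0 P) (K := rho1 P) ifi) => //.
  + by move=> t /traj_eq[].
  + exact: ltW.
  + by move=> t /pos[].
  + move=> t /nneg[_ et _ _]; rewrite /fi.
    have : 0 <= sigma1 P * gamma P * e t by rewrite !mulr_ge0 // ltW.
    lra.
- apply: (leb_primitive_gt0 (x0 := j0 P) (K := rho2 P) ifj) => //.
  + by move=> t /traj_eq[].
  + exact: ltW.
  + by move=> t /pos[].
  + move=> t /nneg[_ et _ _]; rewrite /fj.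
    have : 0 <= sigma2 P * gamma P * e t by rewrite !mulr_ge0 // ltW.
    lra.
Qed.

Lemma trajectory_gt0 t : 0 <= t <= T -> [/\ 0 < s t, 0 < e t, 0 < i t & 0 < j t].
Proof.
have [_ [_ [_ [s00 e00 i00 j00 _]]]] := Pok.
have [cs ce ci cj _] := trajectory_continuous.
pose g t := Num.min (Num.min (s t) (e t)) (Num.min (i t) (j t)).
have gt0E r : (0 < g r) = [&& 0 < s r, 0 < e r, 0 < i r & 0 < j r].
  by rewrite !lt_min !andbA.
have ge0E r : (0 <= g r) = [&& 0 <= s r, 0 <= e r, 0 <= i r & 0 <= j r].
  by rewrite !le_min !andbA.
move=> tT; suff : 0 < g t by rewrite gt0E => /and4P.
move: t tT; apply: continuous_induction_gt0.
- move=> x.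
  exact: continuous_min (continuous_min (cs x) (ce x)) (continuous_min (ci x) (cj x)).
- by rewrite gt0E; have [-> -> -> ->] := trajectory_at0; rewrite s00 e00 i00 j00.
move=> c c_in gpos gc; rewrite gt0E; apply/and4P; apply: trajectory_step c_in _ _.
  by move=> r /gpos; rewrite gt0E => /and4P.
move=> r /andP[r0]; rewrite le_eqVlt => /orP[/eqP->|rc].
  by move: gc; rewrite ge0E => /and4P.
by have := gpos r; rewrite r0 rc gt0E => /(_ isT) /and4P[/ltW ? /ltW ? /ltW ? /ltW ?].
Qed.

Lemma population_gt0 t : 0 <= t <= T -> 0 < n t.
Proof.
move=> /[dup] tT /andP[t0 tT'].
have in_T r : 0 <= r <= t -> 0 <= r <= T.
  by case/andP=> r0 rt; rewrite r0 (le_trans rt tT').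
have [st et it jt] := trajectory_gt0 tT.
apply: lt_le_trans (population_ge tT _); first by rewrite !addr_gt0.
by move=> r /in_T /trajectory_gt0[_ _ /ltW ? /ltW ?].
Qed.

End trajectory.

Lemma concave_quadratic_argmax {R : realType} (c um w : R) : 0 <= w <= um ->
  (forall v : R, 0 <= v <= um -> c * v - 2^-1 * v ^+ 2 <= c * w - 2^-1 * w ^+ 2) ->
  w = Num.min (Num.max c 0) um.
Proof.
move=> /andP[w0 wum] wmax; apply/eqP; rewrite eq_le.
have [c0|c0] := leP c 0.
  have := wmax 0; rewrite lexx (le_trans w0 wum) => /(_ isT) w_le0.
  by rewrite min_l ?(le_trans w0 wum) // w0 andbT; nra.
have [cum|cum] := leP c um.
  have := wmax c; rewrite ltW //= cum => /(_ isT) wc.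
  by apply/andP; split; nra.
have := wmax um; rewrite lexx (le_trans w0 wum) => /(_ isT) wu.
by rewrite wum /=; nra.
Qed.

Definition switching {R : realType} (P : ocp_params R) (s i n p1 p2 : R) : R :=
  beta1 P * (s / n) * i * (p1 - p2) / alpha3 P.

Lemma hamiltonianB {R : realType} (P : ocp_params R) (s e i j n p1 p2 p3 p4 p5 v w : R) :
  alpha3 P != 0 ->
  hamiltonian P s e i j n p1 p2 p3 p4 p5 w - hamiltonian P s e i j n p1 p2 p3 p4 p5 v =
  alpha3 P * ((switching P s i n p1 p2 * w - 2^-1 * w ^+ 2)
              - (switching P s i n p1 p2 * v - 2^-1 * v ^+ 2)).
Proof.
(* With [s / n] abstracted, [field] does not ask for [n != 0]. *)
by move=> a3; rewrite /hamiltonian /infl /switching; set sn := s / n; field.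
Qed.

Lemma switching_continuous {R : realType} (P : ocp_params R) (A : set R)
    (s i n p1 p2 : R -> R) :
  {within A, continuous s} -> {within A, continuous i} -> {within A, continuous n} ->
  {within A, continuous p1} -> {within A, continuous p2} -> (forall t, A t -> n t != 0) ->
  {within A, continuous (fun t => switching P (s t) (i t) (n t) (p1 t) (p2 t))}.
Proof.
move=> cs ci cn cp1 cp2 n_neq0; rewrite continuous_subspace_in => t; rewrite inE => At.
have sn : {for t, continuous (fun r : subspace A => s r / n r)}.
  exact: cvgM (cs t) (cvgV (n_neq0 t At) (cn t)).
exact: cvgM (cvgM (cvgM (cvgM (cvg_cst _) sn) (ci t)) (cvgB (cp1 t) (cp2 t))) (cvg_cst _).
Qed.

Lemma continuous_clamp {R : realType} {T : topologicalType} (w : T -> R) (lo hi : R) :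
  continuous w -> continuous (fun t => Num.min (Num.max (w t) lo) hi).
Proof.
by move=> cw t; exact: continuous_min (continuous_max (cw t) (cvg_cst _)) (cvg_cst _).
Qed.

Theorem lemma7 (R : realType) (P : ocp_params R) (u s e i j n p1 p2 p3 p4 p5 : R -> R) :
  ocp_params_ok P ->
  optimal_ocp2 P u s e i j n ->
  is_adjoint P u s i j n p1 p2 p3 p4 p5 ->
  nontrivial_adjoint P p1 p2 p3 p4 p5 ->
  (forall t, 0 <= t <= TT P -> forall v, 0 <= v <= umax P ->
     hamiltonian P (s t) (e t) (i t) (j t) (n t) (p1 t) (p2 t) (p3 t) (p4 t) (p5 t) v
     <= hamiltonian P (s t) (e t) (i t) (j t) (n t) (p1 t) (p2 t) (p3 t) (p4 t) (p5 t) (u t)) ->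
  {within `[0, TT P], continuous u}.
Proof.
move=> Pok [[_ u_bnd] [traj _]] [[int_g1 int_g2 _ _ _] adj] _ Hmax.
have [_ [_ [[_ _ a3 _] _]]] := Pok.
pose w t := switching P (s t) (i t) (n t) (p1 t) (p2 t).
have uE t : 0 <= t <= TT P -> Num.min (Num.max (w t) 0) (umax P) = u t.
  move=> tT; apply/esym/concave_quadratic_argmax => [|v v_in]; first exact: u_bnd.
  by have := Hmax t tT v v_in; rewrite -subr_ge0 hamiltonianB ?gt_eqF // pmulr_rge0 // subr_ge0.
apply: (subspace_eq_continuous (f := fun t => Num.min (Num.max (w t) 0) (umax P))).
  by move=> t; rewrite inE => /uE.
have [cs _ ci _ cn] := trajectory_continuous traj.
have cp1 : {within `[0, TT P], continuous p1}.
  by apply: (leb_primitive_back_continuous (x0 := 0) int_g1) => t /adj[].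
have cp2 : {within `[0, TT P], continuous p2}.
  by apply: (leb_primitive_back_continuous (x0 := - alpha1 P) int_g2) => t /adj[].
apply: continuous_clamp; apply: switching_continuous => // t.
by rewrite /= in_itv /= => /(population_gt0 Pok u_bnd traj) /lt0r_neq0.
Qed.
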